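(* Let $(\Omega,\mathbb B(\Omega),\mu,T)$ be a measure-preserving dynamical system and $\mathbf X$ an $\mathbb R^N$-valued random vector on $(\Omega,\mathbb B(\Omega))$ such that $h_\mu(T)=\lim_{d\to\infty}h_\mu(T,\mathcal P^{\mathbf X}(d))$, and such that either (a) there is $d_0\in\mathbb N$ with $h^{\mathbf X}_\mu(T,d)\ge h^{\mathbf X}_\mu(T,d+1)$ for all $d\ge d_0$, or (b) $\lim_{d\to\infty}h^{\mathbf X}_{\mu,\triangle}(T,d)$ exists. If $h_\mu(T)=\limsup_{d\to\infty}h^{\mathbf X}_\mu(T,d)$, then $h_\mu(T)=\limsup_{d\to\infty}h^{\mathbf X}_{\mu,\mathrm{cond}}(T,d)$.
   Context: A measure-preserving dynamical system $(\Omega,\mathbb B(\Omega),\mu,T)$ consists of a nonempty topological space $\Omega$ with Borel $\sigma$-algebra $\mathbb B(\Omega)$, a probability measure $\mu$, and a measurable map $T:\Omega\to\Omega$ with $\mu(T^{-1}B)=\mu(B)$ for all $B\in\mathbb B(\Omega)$. For a finite partition $\mathcal P=\{P_0,\dots,P_l\}\subset\mathbb B(\Omega)$ of $\Omega$: $H(\mathcal P)=-\sum_{P\in\mathcal P}\mu(P)\ln\mu(P)$ (with $0\ln0=0$); $\mathcal P_n$ is the partition consisting of the sets $P_{a_0}\cap T^{-1}(P_{a_1})\cap\dots\cap T^{-(n-1)}(P_{a_{n-1}})$, $a_i\in\{0,\dots,l\}$; $h_\mu(T,\mathcal P)=\lim_{n\to\infty}(H(\mathcal P_{n+1})-H(\mathcal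 P_n))$; the Kolmogorov–Sinai entropy is $h_\mu(T)=\sup_{\mathcal P}h_\mu(T,\mathcal P)$ over finite partitions. Let $\Pi_d$ be the set of permutations of $\{0,1,\dots,d\}$. A vector $(x_0,\dots,x_d)\in\mathbb R^{d+1}$ has ordinal pattern $\pi=(r_0,\dots,r_d)\in\Pi_d$ if $x_{r_0}\ge x_{r_1}\ge\dots\ge x_{r_d}$ and $r_{l-1}>r_l$ whenever $x_{r_{l-1}}=x_{r_l}$. For a random vector $\mathbf X=(X_1,\dots,X_N)$ and $d\in\mathbb N$, the ordinal partition $\mathcal P^{\mathbf X}(d)$ consists of the sets $P_{(\pi_1,\dots,\pi_N)}=\{\omega: (X_i(T^{d}\omega),X_i(T^{d-1}\omega),\dots,X_i(T\omega),X_i(\omega))\text{ has ordinal pattern }\pi_i\text{ for } i=1,\dots,N\}$, $\pi_i\in\Pi_d$. Permutation entropy: $h^{\mathbf X}_\mu(T,d)=\frac1d H(\mathcal P^{\mathbf X}(d))$. Sorting entropy: $h^{\mathbf X}_{\mu,\triangle}(T,d)=H(\mathcal P^{\mathbf X}(d+1))-H(\mathcal P^{\mathbf X}(d))$. Conditional entropy of ordinal patterns: $h^{\mathbf X}_{\mu,\mathrm{cond}}(T,d)=H(\mathcal P^{\mathbf X}(d)_2)-H(\mathcal P^{\mathbf X}(d))$. *)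

From HB Require Import structures.
From mathcomp Require Import all_boot all_order all_algebra all_fingroup.
From mathcomp Require Import all_classical all_reals all_analysis.
Set Implicit Arguments. Unset Strict Implicit. Unset Printing Implicit Defensive.
Import Order.TTheory GRing.Theory Num.Theory.
Local Open Scope classical_set_scope.
Local Open Scope ring_scope.

Definition borel (S : ptopologicalType) := g_sigma_algebraType (@open S).

Section Entropy.
Context (R : realType) (d : measure_display) (Om : measurableType d).

(* Shannon entropy of a finite indexed family of sets (a finite partition
   when the family is a partition); 0 ln 0 = 0 *)
Definition Hent (mu : set Om -> \bar R) (I : finType) (P : I -> set Om) : R :=
  - \sum_(i : I) (fine (mu (P i)) * ln (fine (mu (P i)))).

(* finite measurable partition indexed by I (empty blocks allowed) *)
Definition is_partition (I : finType) (P : I -> set Om) : Prop :=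
  (forall i, measurable (P i)) /\
  (forall i j, i != j -> P i `&` P j = set0) /\
  (forall w, exists i, P i w).

Definition joinP (T : Om -> Om) (I : finType) (P : I -> set Om) (n : nat)
  : {ffun 'I_n -> I} -> set Om :=
  fun a => [set w | forall j : 'I_n, P (a j) (iter j T w)].
Arguments joinP T {I} P n _.

Definition h_part (mu : set Om -> \bar R) (T : Om -> Om) (I : finType)
  (P : I -> set Om) : R :=
  limn (fun n => Hent mu (joinP T P n.+1) - Hent mu (joinP T P n)).

Definition hKS (mu : set Om -> \bar R) (T : Om -> Om) : \bar R :=
  ereal_sup [set x | exists (l : nat) (P : 'I_l.+1 -> set Om),
                       is_partition P /\ x = (h_part mu T P)%:E].

(* (x_0,...,x_dd) has ordinal pattern pi = (r_0,...,r_dd), r_l = pi l *)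
Definition has_pattern (dd : nat) (x : 'I_dd.+1 -> R) (pi : 'S_dd.+1) : Prop :=
  forall l : nat, (l < dd)%N ->
    x (pi (inord l.+1)) <= x (pi (inord l)) /\
    (x (pi (inord l)) = x (pi (inord l.+1)) ->
       (pi (inord l.+1) < pi (inord l))%N).

Definition ord_part (T : Om -> Om) (N : nat) (X : 'I_N -> Om -> R) (dd : nat)
  : {ffun 'I_N -> 'S_dd.+1} -> set Om :=
  fun pis => [set w | forall i : 'I_N,
     has_pattern (fun k : 'I_dd.+1 => X i (iter (dd - k) T w)) (pis i)].
Arguments ord_part T {N} X dd _.

Definition perm_ent mu T N (X : 'I_N -> Om -> R) (dd : nat) : R :=
  Hent mu (ord_part T X dd) / dd%:R.
Definition sort_ent mu T N (X : 'I_N -> Om -> R) (dd : nat) : R :=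
  Hent mu (ord_part T X dd.+1) - Hent mu (ord_part T X dd).
Definition cond_ent mu T N (X : 'I_N -> Om -> R) (dd : nat) : R :=
  Hent mu (joinP T (ord_part T X dd) 2) - Hent mu (ord_part T X dd).

End Entropy.
Arguments joinP {d Om} T {I} P n _ _.
Arguments ord_part {R d Om} T {N} X dd _ _.

From HB Require Import structures.
From mathcomp Require Import all_boot all_order all_algebra all_fingroup.
From mathcomp Require Import all_classical all_reals all_analysis.
From mathcomp Require Import ring lra zify.
Import Order.TTheory GRing.Theory Num.Theory numFieldNormedType.Exports.
Set Implicit Arguments. Unset Strict Implicit. Unset Printing Implicit Defensive.
Local Open Scope classical_set_scope.
Local Open Scope ring_scope.

(* The ordinal partition P(d) is the partition into fibres of the map sending
   w to the ordinal patterns of its windows of length d+1.  For any finite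
   partition P, stationarity and strong subadditivity
   H(X,Y,Z) + H(Y) <= H(X,Y) + H(Y,Z) make the increments H(P_(n+1)) - H(P_n)
   nonincreasing, so h_mu(T,P) <= H(P_2) - H(P).  The pattern of a window of
   length d+2 determines the patterns of its two sub-windows of length d+1,
   hence H(P(d)_2) <= H(P(d+1)).  Together,
   h_mu(T,P(d)) <= cond(d) <= sort(d), so h_mu(T) <= limsup cond <= limsup sort.
   Under (a) eventually sort(d) <= perm(d); under (b) the limit of the
   increments sort(d) is bounded by limsup H(P(d))/d, a Cesaro-type argument.
   Either way limsup sort <= limsup perm = h_mu(T). *)

Section Gibbs.
Context (R : realType).

Lemma gibbs_term_le (p m : R) : 0 <= p -> 0 <= m -> (0 < p -> 0 < m) ->
  p * ln m - p * ln p <= m - p.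
Proof.
move=> p0 m0 pm; have [->|pn0] := eqVneq p 0; first by rewrite !mul0r !subr0.
have pp : 0 < p by rewrite lt_def pn0.
have mp : 0 < m := pm pp.
have mpp : 0 < m / p by rewrite divr_gt0.
have : ln (m / p) <= m / p - 1.
  by have := @le_ln1Dx R (m / p - 1); rewrite addrCA subrr addr0; apply; lra.
rewrite -mulrBr -ln_div ?posrE// -(ler_pM2l pp) => /le_trans; apply.
by rewrite mulrBr mulr1 mulrCA divff ?mulr1// gt_eqF.
Qed.

Lemma gibbs_inequality (K : finType) (p m : K -> R) :
  (forall k, 0 <= p k) -> (forall k, 0 <= m k) -> (forall k, 0 < p k -> 0 < m k) ->
  \sum_k m k <= \sum_k p k ->
  \sum_k p k * ln (m k) <= \sum_k p k * ln (p k).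
Proof.
move=> p0 m0 pm smp.
have : \sum_k (p k * ln (m k) - p k * ln (p k)) <= \sum_k (m k - p k).
  by apply: ler_sum => k _; exact: gibbs_term_le (p0 k) (m0 k) (pm k).
rewrite !sumrB; lra.
Qed.

End Gibbs.

Section FiniteEntropy.
Context (R : realType) (d : measure_display) (Om : measurableType d)
  (mu : probability Om R).

Definition fibre (I : Type) (f : Om -> I) (i : I) : set Om := f @^-1` [set i].
Definition measurable_fibres (I : Type) (f : Om -> I) := forall i, measurable (fibre f i).
Definition mass (I : Type) (f : Om -> I) (i : I) : R := fine (mu (fibre f i)).
Definition entropy (I : finType) (f : Om -> I) : R := Hent mu (fibre f).

Lemma probability_fineK A : measurable A -> mu A = (fine (mu A))%:E.
Proof. by move=> mA; rewrite fineK// fin_num_measure. Qed.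

Lemma mass_ge0 (I : Type) (f : Om -> I) i : 0 <= mass f i.
Proof. exact: fine_ge0. Qed.

Lemma mass_le1 (I : Type) (f : Om -> I) i : measurable_fibres f -> mass f i <= 1.
Proof. by move=> mf; rewrite -lee_fin -probability_fineK//; exact: probability_le1. Qed.

Lemma fibre_comp (I : Type) (J : finType) (f : Om -> J) (phi : J -> I) i :
  fibre (phi \o f) i = \bigcup_(j in [set j | phi j = i]) fibre f j.
Proof. by apply/seteqP; split => [w <-|w [j <- <-]]//; exists (f w). Qed.

Lemma measurable_fibres_comp (I : Type) (J : finType) (f : Om -> J) (phi : J -> I) :
  measurable_fibres f -> measurable_fibres (phi \o f).
Proof. by move=> mf i; rewrite fibre_comp; apply: fin_bigcup_measurable. Qed.

Lemma mass_comp (I : eqType) (J : finType) (f : Om -> J) (phi : J -> I) i :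
  measurable_fibres f -> mass (phi \o f) i = \sum_(j | phi j == i) mass f j.
Proof.
move=> mf; rewrite /mass fibre_comp measure_fin_bigcup//; last 2 first.
- exact: finite_finset.
- by move=> j k _ _ [w [/= <- <-]].
have -> : [set j | phi j = i] = [set` (fun j => phi j == i)].
  by apply/seteqP; split => j /= /eqP.
rewrite -(@bigfs _ _ _ _ (index_enum J)) ?index_enum_uniq//; last first.
  by move=> j _; rewrite mem_index_enum.
rewrite (eq_bigr (fun j => (mass f j)%:E)) ?sumEFin// => j _.
exact: probability_fineK.
Qed.

Lemma sum_mass (J : finType) (f : Om -> J) : measurable_fibres f -> \sum_j mass f j = 1.
Proof.
move=> mf; have := mass_comp (fun=> tt) tt mf; rewrite (eq_bigl xpredT)// => <-.
rewrite /mass (_ : fibre _ _ = setT) ?probability_setT//.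
by apply/seteqP; split.
Qed.

Lemma sum_mass_comp (I J : finType) (f : Om -> J) (phi : J -> I) (G : I -> R) :
  measurable_fibres f -> \sum_j mass f j * G (phi j) = \sum_i mass (phi \o f) i * G i.
Proof.
move=> mf; rewrite (partition_big phi xpredT)//; apply: eq_bigr => i _.
by rewrite mass_comp// big_distrl; apply: eq_bigr => j /eqP <-.
Qed.

Lemma mass_le_comp (I J : finType) (f : Om -> J) (phi : J -> I) j :
  measurable_fibres f -> mass f j <= mass (phi \o f) (phi j).
Proof.
move=> mf; rewrite mass_comp// (bigD1 j)//= lerDl.
by apply: sumr_ge0 => *; exact: mass_ge0.
Qed.

Lemma entropyE (I : finType) (f : Om -> I) :
  entropy f = - \sum_i mass f i * ln (mass f i).
Proof. by []. Qed.

Lemma entropy_ge0 (I : finType) (f : Om -> I) : measurable_fibres f -> 0 <= entropy f.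
Proof.
move=> mf; rewrite entropyE oppr_ge0; apply: sumr_le0 => i _.
by rewrite mulr_ge0_le0 ?mass_ge0 ?ln_le0 ?mass_le1.
Qed.

Lemma entropy_comp_le (I J : finType) (f : Om -> J) (phi : J -> I) :
  measurable_fibres f -> entropy (phi \o f) <= entropy f.
Proof.
move=> mf; rewrite !entropyE lerN2 -sum_mass_comp//; apply: ler_sum => j _.
have [->|pj] := eqVneq (mass f j) 0; first by rewrite !mul0r.
have pj0 : 0 < mass f j by rewrite lt_def pj mass_ge0.
rewrite ler_wpM2l ?mass_ge0// ler_ln ?posrE ?mass_le_comp//.
exact: lt_le_trans (mass_le_comp phi j mf).
Qed.

Lemma coarser_factor (I J : Type) (f : Om -> J) (g : Om -> I) :
  (forall w w', f w = f w' -> g w = g w') -> exists phi : J -> I, g = phi \o f.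
Proof.
move=> fg; exists (fun b => g (xget point [set w | f w = b])).
apply/funext => w /=; case: xgetP => [w' _ fw'|/(_ w)/(_ erefl)//].
exact: fg.
Qed.

Lemma measurable_fibres_coarser (I J : finType) (f : Om -> J) (g : Om -> I) :
  (forall w w', f w = f w' -> g w = g w') ->
  measurable_fibres f -> measurable_fibres g.
Proof. by move=> /coarser_factor [phi ->]; exact: measurable_fibres_comp. Qed.

Lemma entropy_le_coarser (I J : finType) (f : Om -> J) (g : Om -> I) :
  (forall w w', f w = f w' -> g w = g w') ->
  measurable_fibres f -> entropy g <= entropy f.
Proof. by move=> /coarser_factor [phi ->]; exact: entropy_comp_le. Qed.

Lemma entropy_eq_fibres (I J : finType) (f : Om -> J) (g : Om -> I) :
  (forall w w', f w = f w' <-> g w = g w') ->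
  measurable_fibres f -> entropy f = entropy g.
Proof.
move=> fg mf; have mg := measurable_fibres_coarser (fun w w' => (fg w w').1) mf.
apply/eqP; rewrite eq_le.
by rewrite (entropy_le_coarser (fun w w' => (fg w w').2))// entropy_le_coarser//; move=> w w' /fg.
Qed.

Lemma measurable_fibres_ffun (J : finType) (I : eqType) (F : J -> Om -> I) :
  (forall j, measurable_fibres (F j)) -> measurable_fibres (fun w => [ffun j => F j w]).
Proof.
move=> mF a; have -> : fibre (fun w => [ffun j => F j w]) a =
    \bigcap_(j in setT) fibre (F j) (a j).
  apply/seteqP; split => w; first by move=> /= <- j _; rewrite /fibre /= ffunE.
  by move=> Fw; apply/ffunP => j; rewrite ffunE; apply: Fw.
by apply: fin_bigcap_measurable => // j _; exact: mF.
Qed.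

Lemma measurable_fibres_bool (b : Om -> bool) : measurable_fun setT b -> measurable_fibres b.
Proof. by move=> mb v; have := mb measurableT [set v] I; rewrite setTI. Qed.

Lemma entropy_comp_sum (I J : finType) (f : Om -> J) (phi : J -> I) :
  measurable_fibres f ->
  entropy (phi \o f) = - \sum_j mass f j * ln (mass (phi \o f) (phi j)).
Proof. by move=> mf; rewrite entropyE (sum_mass_comp phi (fun i => ln (mass (phi \o f) i))). Qed.

Lemma sum_markov_mass_le1 (A B C : finType) (F : Om -> A * B * C) :
  measurable_fibres F ->
  \sum_k mass (fst \o F) k.1 * mass (fun w => ((F w).1.2, (F w).2)) (k.1.2, k.2)
          / mass (fun w => (F w).1.2) k.1.2 <= 1.
Proof.
move=> mF; set q := mass _; set r := mass _; set s := mass _.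
have rs b : \sum_c r (b, c) = s b.
  rewrite /s (_ : (fun w => _) = fst \o (fun w => ((F w).1.2, (F w).2)))//.
  rewrite mass_comp//; last exact: measurable_fibres_comp (fun k => (k.1.2, k.2)) mF.
  rewrite -(@big_pred1_eq R 0 +%R _ b (fun b => \sum_c r (b, c))) pair_big_dep.
  by apply: eq_big => -[x y] //=; rewrite andbT.
rewrite -(sum_mass (measurable_fibres_comp fst mF)) -/q.
rewrite -(pair_bigA _ (fun ab c => q ab * r (ab.2, c) / s ab.2)) /=.
apply: ler_sum => ab _; under eq_bigr do rewrite mulrAC.
rewrite -big_distrr /= rs.
have [->|s0] := eqVneq (s ab.2) 0; first by rewrite invr0 !mulr0 mass_ge0.
by rewrite divfK.
Qed.

Lemma entropy_submodular (A B C : finType) (f1 : Om -> A) (f2 : Om -> B) (f3 : Om -> C) :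
  measurable_fibres (fun w => (f1 w, f2 w, f3 w)) ->
  entropy (fun w => (f1 w, f2 w, f3 w)) + entropy f2 <=
  entropy (fun w => (f1 w, f2 w)) + entropy (fun w => (f2 w, f3 w)).
Proof.
set F := fun w => _ => mF.
pose ph12 (k : A * B * C) := k.1.
pose ph23 (k : A * B * C) := (k.1.2, k.2).
pose ph2 (k : A * B * C) := k.1.2.
rewrite -[f2]/(ph2 \o F) -[fun w => (f1 w, f2 w)]/(ph12 \o F).
rewrite -[fun w => (f2 w, f3 w)]/(ph23 \o F) !entropy_comp_sum// entropyE.
set p := mass F; set q := mass (ph12 \o F); set r := mass (ph23 \o F).
set s := mass (ph2 \o F).
have pos k : 0 < p k -> [/\ 0 < q (ph12 k), 0 < r (ph23 k) & 0 < s (ph2 k)].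
  by move=> pk; split; apply: lt_le_trans pk (mass_le_comp _ _ mF).
pose m k := q (ph12 k) * r (ph23 k) / s (ph2 k).
have m0 k : 0 <= m k by rewrite /m !mulr_ge0 ?invr_ge0 ?mass_ge0.
have pm k : 0 < p k -> 0 < m k by move=> /pos [q0 r0 s0]; rewrite /m !mulr_gt0 ?invr_gt0.
have sum_m : \sum_k m k <= \sum_k p k by rewrite sum_mass//; exact: sum_markov_mass_le1.
have lnm k : p k * ln (m k) =
    p k * ln (q (ph12 k)) + p k * ln (r (ph23 k)) - p k * ln (s (ph2 k)).
  have [->|pk] := eqVneq (p k) 0; first by rewrite !mul0r addr0 subr0.
  have [q0 r0 s0] : [/\ 0 < q (ph12 k), 0 < r (ph23 k) & 0 < s (ph2 k)].
    by apply: pos; rewrite lt_def pk mass_ge0.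
  by rewrite /m ln_div ?posrE ?mulr_gt0// lnM ?posrE// mulrBr mulrDr.
have := gibbs_inequality (fun k => mass_ge0 F k) m0 pm sum_m.
rewrite (eq_bigr _ (fun k _ => lnm k)) sumrB big_split /=; lra.
Qed.

End FiniteEntropy.

Section Itinerary.
Context (R : realType) (d : measure_display) (Om : measurableType d)
  (mu : probability Om R) (T : Om -> Om).
Hypothesis mT : measurable_fun setT T.
Hypothesis muT : forall B, measurable B -> mu (T @^-1` B) = mu B.

Lemma measurable_iter k : measurable_fun setT (iter k T).
Proof. by elim: k => [|k IH] /=; [exact: measurable_id | exact: measurableT_comp]. Qed.

Lemma measurable_fibres_compr (I : Type) (f : Om -> I) (S : Om -> Om) :
  measurable_fun setT S -> measurable_fibres f -> measurable_fibres (f \o S).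
Proof. by move=> mS mf i; have := mS measurableT _ (mf i); rewrite setTI. Qed.

Lemma entropy_compT (I : finType) (f : Om -> I) :
  measurable_fibres f -> entropy mu (f \o T) = entropy mu f.
Proof.
move=> mf; rewrite !entropyE; congr (- _); apply: eq_bigr => i _.
by rewrite /mass (_ : fibre _ i = T @^-1` fibre f i)// muT.
Qed.

Definition itinerary (I : Type) (g : Om -> I) n (w : Om) : {ffun 'I_n -> I} :=
  [ffun j : 'I_n => g (iter j T w)].

Lemma joinP_fibre (I : finType) (g : Om -> I) n :
  joinP T (fibre g) n = fibre (itinerary g n).
Proof.
apply/funext => a; apply/seteqP; split => w; rewrite /joinP /fibre /itinerary /=.
  by move=> H; apply/ffunP => j; rewrite ffunE; apply: H.
by move=> <- j; rewrite ffunE.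
Qed.

Lemma measurable_fibres_itinerary (I : eqType) (g : Om -> I) n :
  measurable_fibres g -> measurable_fibres (itinerary g n).
Proof.
move=> mg; apply: measurable_fibres_ffun => j.
exact: measurable_fibres_compr (measurable_iter j) mg.
Qed.

Lemma itinerary_eq (I : Type) (g : Om -> I) n w w' :
  itinerary g n w = itinerary g n w' <->
  forall k, (k < n)%N -> g (iter k T w) = g (iter k T w').
Proof.
split=> [/ffunP e k kn|e]; first by have := e (Ordinal kn); rewrite !ffunE.
by apply/ffunP => j; rewrite !ffunE; apply: e.
Qed.

Lemma itinerary_eqS (I : Type) (g : Om -> I) n w w' :
  itinerary g n.+1 w = itinerary g n.+1 w' <->
  g w = g w' /\ itinerary g n (T w) = itinerary g n (T w').
Proof.
rewrite !itinerary_eq; split=> [e|[e0 e] [//|k]]; last by rewrite ltnS !iterSr; exact: e.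
by split=> [|k kn]; [exact: (e 0%N) | rewrite -!iterSr; apply: e].
Qed.

Lemma itinerary_eqSr (I : Type) (g : Om -> I) n w w' :
  itinerary g n.+1 w = itinerary g n.+1 w' <->
  itinerary g n w = itinerary g n w' /\ g (iter n T w) = g (iter n T w').
Proof.
rewrite !itinerary_eq; split=> [e|[e en] k]; first by split=> [k kn|]; apply: e => //; exact: ltnW.
by rewrite ltnS leq_eqVlt => /orP [/eqP ->//|]; exact: e.
Qed.

Section Increments.
Context (I : finType) (g : Om -> I).
Hypothesis mg : measurable_fibres g.
Local Notation H n := (entropy mu (itinerary g n)).

Lemma entropy_itinerary1 : H 1 = entropy mu g.
Proof.
apply: (entropy_eq_fibres mu _ (measurable_fibres_itinerary mg)) => w w'.
by rewrite itinerary_eq; split=> [/(_ 0%N erefl)|e [|]].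
Qed.

Lemma entropy_itinerary_leS n : H n <= H n.+1.
Proof.
apply: (entropy_le_coarser mu _ (measurable_fibres_itinerary mg)).
by move=> w w' /itinerary_eqSr [].
Qed.

Lemma entropy_itinerary_incr_leS n : H n.+2 - H n.+1 <= H n.+1 - H n.
Proof.
(* Apply submodularity to (g, f2, f3): its two pairs are the itineraries of
   length n+1 starting at w and at T w. *)
pose f2 := itinerary g n \o T; pose f3 w := g (iter n.+1 T w).
have E123 w w' : (g w, f2 w, f3 w) = (g w', f2 w', f3 w') <->
    itinerary g n.+2 w = itinerary g n.+2 w'.
  rewrite itinerary_eqSr itinerary_eqS.
  by split=> [[e1 e2 e3]|[[e1 e2] e3]]; [do !split | congr (_, _, _)].
have m123 : measurable_fibres (fun w => (g w, f2 w, f3 w)).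
  exact: measurable_fibres_coarser (fun w w' => (E123 w w').2) (measurable_fibres_itinerary mg).
have E12 w w' : (g w, f2 w) = (g w', f2 w') <-> itinerary g n.+1 w = itinerary g n.+1 w'.
  by rewrite itinerary_eqS; split=> [[e1 e2]|[e1 e2]]; [split | congr (_, _)].
have E23 w w' : (f2 w, f3 w) = (f2 w', f3 w') <->
    (itinerary g n.+1 \o T) w = (itinerary g n.+1 \o T) w'.
  rewrite /= itinerary_eqSr /f3 !iterSr.
  by split=> [[e2 e3]|[e2 e3]]; [split | congr (_, _)].
have := entropy_submodular mu m123.
rewrite (entropy_eq_fibres mu E123 m123).
rewrite (entropy_eq_fibres mu E12 (measurable_fibres_comp (fun k => k.1) m123)).
rewrite (entropy_eq_fibres mu E23 (measurable_fibres_comp (fun k => (k.1.2, k.2)) m123)).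
rewrite !entropy_compT; try exact: measurable_fibres_itinerary.
move=> ?; lra.
Qed.

Lemma h_part_fibre_bounds :
  0 <= h_part mu T (fibre g) <= entropy mu (itinerary g 2) - entropy mu g.
Proof.
rewrite /h_part -entropy_itinerary1.
under eq_fun do rewrite !joinP_fibre.
set u := fun n => _.
have u_noninc : nonincreasing_seq u.
  by apply/nonincreasing_seqP => n; exact: entropy_itinerary_incr_leS.
have u0 n : 0 <= u n by rewrite /u subr_ge0 entropy_itinerary_leS.
have cu : cvgn u by apply: nonincreasing_is_cvgn => //; exists 0 => _ [n _ <-].
apply/andP; split; first by apply: limr_ge => //; exact: nearW.
exact: (nonincreasing_cvgn_ge u_noninc cu 1).
Qed.

End Increments.

End Itinerary.

Section OrdinalPattern.
Context (R : realType) (dd : nat).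
Local Notation n := dd.+1.
Implicit Types (x y : 'I_n -> R) (pi : 'S_n).

Definition pattern_lt x (i j : 'I_n) : bool :=
  (x j < x i) || ((x i == x j) && (j < i)%N).

Lemma pattern_lt_irr x : irreflexive (pattern_lt x).
Proof. by move=> i; rewrite /pattern_lt ltxx eqxx ltnn. Qed.

Lemma pattern_lt_trans x : transitive (pattern_lt x).
Proof.
move=> j i k; rewrite /pattern_lt => /orP[h1|/andP[/eqP e1 h1]] /orP[h2|/andP[/eqP e2 h2]].
- by rewrite (lt_trans h2 h1).
- by rewrite -e2 h1.
- by rewrite e1 h2.
- by rewrite e1 e2 eqxx (ltn_trans h2 h1) orbT.
Qed.

Lemma pattern_lt_asym x i j : pattern_lt x i j -> pattern_lt x j i = false.
Proof.
by move=> ij; apply/negP => /(@pattern_lt_trans x j i i ij); rewrite pattern_lt_irr.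
Qed.

Lemma pattern_lt_total x i j : i != j -> pattern_lt x i j || pattern_lt x j i.
Proof.
move=> ij; rewrite /pattern_lt; case: ltrgtP => //= _.
by rewrite -neq_ltn eq_sym.
Qed.

Lemma pattern_ltP x i j :
  pattern_lt x i j <-> x j <= x i /\ (x i = x j -> (j < i)%N).
Proof.
rewrite /pattern_lt; split=> [/orP [lt|/andP [/eqP -> //]]|].
  by split=> [|e]; [exact: ltW | rewrite e ltxx in lt].
move=> [+ E]; rewrite le_eqVlt => /orP [/eqP e|->//].
by rewrite e eqxx (E (esym e)) orbT.
Qed.

Lemma has_patternE x pi :
  has_pattern x pi <-> sorted (pattern_lt x) [seq pi i | i <- enum 'I_n].
Proof.
have nthE l : (l < n)%N ->
    nth (pi ord0) [seq pi i | i <- enum 'I_n] l = pi (inord l).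
  move=> ln; rewrite (nth_map ord0) ?size_enum_ord//.
  by rewrite -[in RHS](nth_enum_ord ord0 ln) inord_val.
split=> [H|/(sortedP (pi ord0)) H l ldd].
  apply/(sortedP (pi ord0)) => l; rewrite size_map size_enum_ord ltnS => ldd.
  by rewrite !nthE ?ltnS ?(ltnW ldd)//; apply/pattern_ltP/H.
apply/pattern_ltP; rewrite -!nthE ?ltnS ?(ltnW ldd)//.
by apply: H; rewrite size_map size_enum_ord ltnS.
Qed.

Lemma has_pattern_ltE x pi :
  has_pattern x pi -> forall a b, pattern_lt x (pi a) (pi b) = (a < b)%N.
Proof.
move=> /has_patternE srt a b.
have ltab (i j : 'I_n) : (i < j)%N -> pattern_lt x (pi i) (pi j).
  move=> ij; have := sorted_ltn_nth (@pattern_lt_trans x) (pi ord0) srt.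
  rewrite size_map size_enum_ord => /(_ i j (ltn_ord i) (ltn_ord j) ij).
  by rewrite !(nth_map ord0) -?enumT ?size_enum_ord// !nth_ord_enum.
case: (ltngtP a b) => [/ltab//|/ltab/pattern_lt_asym//|/val_inj->].
exact: pattern_lt_irr.
Qed.

Lemma has_pattern_uniq x pi pi' : has_pattern x pi -> has_pattern x pi' -> pi = pi'.
Proof.
move=> /has_patternE s /has_patternE s'; apply/permP => i.
suff /eq_in_map/(_ i (mem_enum _ i)) :
  [seq pi i | i <- enum 'I_n] = [seq pi' i | i <- enum 'I_n] by [].
apply: (irr_sorted_eq (@pattern_lt_trans x) (@pattern_lt_irr x) s s') => j.
by apply/mapP/mapP => _; [exists ((pi'^-1)%g j) | exists ((pi^-1)%g j)];
  rewrite ?mem_enum ?permKV.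
Qed.

Lemma has_pattern_exists x : exists pi, has_pattern x pi.
Proof.
pose le i j := (i == j) || pattern_lt x i j.
have le_total : total le.
  move=> i j; case: (eqVneq i j) => [->|ij]; first by rewrite /le eqxx.
  by rewrite /le (negbTE ij) eq_sym (negbTE ij) pattern_lt_total.
pose s := sort le (enum 'I_n).
have us : uniq s by rewrite sort_uniq enum_uniq.
have ss : size s = n by rewrite size_sort size_enum_ord.
have /(sortedP ord0) srt : sorted le s := sort_sorted le_total _.
have f_inj : injective (fun i : 'I_n => nth ord0 s i).
  by move=> i j /eqP; rewrite nth_uniq ?ss// => /eqP /val_inj.
exists (perm f_inj); apply/has_patternE/(sortedP ord0) => l.
rewrite size_map size_enum_ord => ln.
rewrite !(nth_map ord0) -?enumT ?size_enum_ord ?(ltnW ln)//.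
rewrite !permE !nth_enum_ord ?(ltnW ln)//.
by have := srt l; rewrite ss /le nth_uniq ?ss ?(ltnW ln)// => /(_ ln); rewrite (ltn_eqF (ltnSn l)).
Qed.

Definition pattern x : 'S_n := xget 1%g [set pi | has_pattern x pi].

Lemma has_pattern_pattern x : has_pattern x (pattern x).
Proof.
rewrite /pattern; case: xgetP => // none.
by have [pi hp] := has_pattern_exists x; case: (none pi hp).
Qed.

Lemma has_patternP x pi : has_pattern x pi <-> pattern x = pi.
Proof.
by split=> [|<-]; [exact/has_pattern_uniq/has_pattern_pattern | exact: has_pattern_pattern].
Qed.

Lemma pattern_eqP x y : pattern x = pattern y <-> pattern_lt x =2 pattern_lt y.
Proof.
have ltE z i j : pattern_lt z i j = (((pattern z)^-1)%g i < ((pattern z)^-1)%g j)%N.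
  by rewrite -(has_pattern_ltE (has_pattern_pattern z)) !permKV.
split=> [e i j|e]; first by rewrite !ltE e.
apply/has_patternP/has_patternE.
have -> : pattern_lt x = pattern_lt y by do 2 apply/funext => ?; rewrite e.
exact/has_patternE/has_pattern_pattern.
Qed.

End OrdinalPattern.

Lemma pattern_lt_comp (R : realType) (m n : nat) (x : 'I_n.+1 -> R)
    (e : 'I_m.+1 -> 'I_n.+1) :
  {mono e : a b / (a < b)%N} ->
  forall a b, pattern_lt (x \o e) a b = pattern_lt x (e a) (e b).
Proof. by move=> emono a b; rewrite /pattern_lt /= emono. Qed.

Section OrdinalPartition.
Context (R : realType) (d : measure_display) (Om : measurableType d)
  (mu : probability Om R) (T : Om -> Om) (N : nat) (X : 'I_N -> Om -> R).
Hypothesis mT : measurable_fun setT T.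
Hypothesis mX : forall i, measurable_fun setT (X i).

Definition window dd i w : 'I_dd.+1 -> R := fun k => X i (iter (dd - k) T w).
Arguments window : clear implicits.

Definition ord_pattern dd w : {ffun 'I_N -> 'S_dd.+1} :=
  [ffun i => pattern (window dd i w)].
Arguments ord_pattern : clear implicits.

Lemma ord_part_fibre dd : ord_part T X dd = fibre (ord_pattern dd).
Proof.
apply/funext => pis; apply/seteqP; split => w; rewrite /ord_part /fibre /=.
  by move=> H; apply/ffunP => i; rewrite ffunE; apply/has_patternP/H.
by move=> <- i; rewrite ffunE; apply/has_patternP.
Qed.

Lemma measurable_fibres_ord_pattern dd : measurable_fibres (ord_pattern dd).
Proof.
(* The patterns are determined by finitely many comparisons of measurable maps. *)
pose cmp w := [ffun i => [ffun ab : 'I_dd.+1 * 'I_dd.+1 =>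
  pattern_lt (window dd i w) ab.1 ab.2]].
have mcmp : measurable_fibres cmp.
  apply: measurable_fibres_ffun => i; apply: measurable_fibres_ffun => -[a b].
  apply: measurable_fibres_bool => /=.
  have mw k : measurable_fun setT (fun w => window dd i w k).
    exact: measurableT_comp (mX i) (measurable_iter mT _).
  apply: measurable_or; first exact: measurable_realfun.measurable_fun_ltr.
  apply: measurable_and; first exact: measurable_realfun.measurable_fun_eqr.
  exact: measurable_cst.
apply: (measurable_fibres_coarser _ mcmp) => w w' /ffunP e.
apply/ffunP => i; rewrite !ffunE; apply/pattern_eqP => a b.
by have /ffunP/(_ (a, b)) := e i; rewrite !ffunE.
Qed.

Lemma entropy_join2_le_succ dd :
  entropy mu (itinerary T (ord_pattern dd) 2) <= entropy mu (ord_pattern dd.+1).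
Proof.
apply: (entropy_le_coarser mu _ (measurable_fibres_ord_pattern (dd := dd.+1))) => w w' /ffunP e.
apply/itinerary_eq => k k2; apply/ffunP => i; rewrite !ffunE; apply/pattern_eqP => a b.
have := e i; rewrite !ffunE => /pattern_eqP el.
(* For k < 2, the window of length dd+1 at T^k w is the window of length dd+2
   at w reindexed by the increasing map ek. *)
pose ek (c : 'I_dd.+1) : 'I_dd.+2 := inord (c + 1 - k).
have ekE c : nat_of_ord (ek c) = (c + 1 - k)%N by rewrite inordK //; have := ltn_ord c; lia.
have ek_mono : {mono ek : a b / (a < b)%N} by move=> a' b'; rewrite !ekE; lia.
have winE v : window dd i (iter k T v) = window dd.+1 i v \o ek.
  apply/funext => c; rewrite /window /= ekE -iterD; congr (X i (iter _ T v)).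
  by have := ltn_ord c; lia.
by rewrite !winE !pattern_lt_comp// el.
Qed.

End OrdinalPartition.

Lemma increment_le_mean (R : realFieldType) (a b : R) (n : nat) : (0 < n)%N ->
  a / n.+1%:R <= b / n%:R -> a - b <= b / n%:R.
Proof.
move=> n0; rewrite -natr1 ler_pdivrMr ?ltr_wpDl ?ler0n// mulrDr mulr1.
by rewrite divfK ?pnatr_eq0 -?lt0n// => ?; lra.
Qed.

Section LimnEsup.
Context (R : realType).
Local Open Scope ereal_scope.
Implicit Types (u v : (\bar R)^nat).

Lemma le_limn_esup u v :
  (\forall n \near \oo, u n <= v n) -> limn_esup u <= limn_esup v.
Proof.
move=> [N _ uv]; rewrite !limn_esup_lim.
apply: lee_lim; [exact: is_cvg_esups | exact: is_cvg_esups |].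
near=> n; apply: ge_ereal_sup => _ [k /= nk <-].
apply: le_trans (uv k _) _; first by apply: leq_trans nk; near: n; exists N.
by apply: ereal_sup_ubound; exists k.
Unshelve. all: by end_near. Qed.

Lemma limn_esupS_le u : limn_esup (fun n => u n.+1) <= limn_esup u.
Proof.
rewrite !limn_esup_lim; apply: lee_lim; [exact: is_cvg_esups | exact: is_cvg_esups |].
apply: nearW => n; apply: ge_ereal_sup => _ [k /= nk <-].
by apply: ereal_sup_ubound; exists k.+1 => //=; exact: leqW.
Qed.

Lemma limn_esup_cvg u l : u @ \oo --> l -> limn_esup u = l.
Proof. by move=> ul; have [_ ->] := cvg_limn_einf_sup ul. Qed.

Lemma lee_from_real_lt (x y : \bar R) :
  (forall r : R, r%:E < x -> r%:E <= y) -> x <= y.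
Proof.
case: x => [r| |] xy; last by rewrite leNye.
- apply/lee_subgt0Pr => e e0; rewrite -EFinB; apply: xy.
  by rewrite lte_fin gtrBl.
- case: y xy => [r| |] xy //; last by have := xy 0%R (ltry _).
  by have := xy (r + 1)%R (ltry _); rewrite lee_fin gerDl ler10.
Qed.

Lemma limn_esup_mean_ge (H : nat -> R) (M : R) (K : nat) :
  (forall n, (0 <= H n)%R) -> (forall n, (K <= n)%N -> (M <= H n.+1 - H n)%R) ->
  M%:E <= limn_esup (fun n => (H n / n%:R)%:E).
Proof.
move=> H0 incr.
have H_ge n : (H K + n%:R * M <= H (K + n)%N)%R.
  elim: n => [|n IH]; first by rewrite mul0r addr0 addn0.
  have := incr (K + n)%N (leq_addr _ _); rewrite addnS mulrSr; lra.
pose v n := (M - K%:R * M * harmonic n)%R.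
have vM : (fun n => (v n)%:E) @ \oo --> M%:E.
  apply: cvg_EFin; first exact: nearW.
  suff: v @ \oo --> (M - K%:R * M * 0)%R by rewrite mulr0 subr0.
  apply: cvgB; first exact: cvg_cst.
  by apply: cvgM; [exact: cvg_cst | exact: cvg_harmonic].
rewrite -(limn_esup_cvg vM); apply: le_trans (limn_esupS_le _).
apply: le_limn_esup; near=> n; rewrite lee_fin /v /=.
have Kn : (K <= n)%N by near: n; exists K.
have := H_ge (n.+1 - K)%N; rewrite subnKC 1?leqW// natrB 1?leqW//.
rewrite ler_pdivlMr ?ltr0n//.
have -> : ((M - K%:R * M / n.+1%:R) * n.+1%:R = (n.+1%:R - K%:R) * M)%R.
  by field; apply/lt0r_neq0; have := ler0n R n; lra.
by have := H0 K; lra.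
Unshelve. all: by end_near. Qed.

Lemma lim_increment_le_limn_esup_mean (H : nat -> R) (l : \bar R) :
  (forall n, (0 <= H n)%R) -> (fun n => (H n.+1 - H n)%:E) @ \oo --> l ->
  l <= limn_esup (fun n => (H n / n%:R)%:E).
Proof.
move=> H0 incr_l; apply: lee_from_real_lt => M Ml.
have [K _ HK] := incr_l _ (open_ereal_gt' Ml).
apply: (limn_esup_mean_ge H0 (K := K)) => n Kn.
by have := HK n Kn; rewrite /= lte_fin => /ltW.
Qed.

Lemma limn_esup_increment_le_mean (H : nat -> R) :
  (forall n, (0 <= H n)%R) ->
  (exists d0 : nat, (1 <= d0)%N /\
      forall n, (d0 <= n)%N -> (H n.+1 / n.+1%:R <= H n / n%:R)%R)
   \/ (exists l : \bar R, (fun n => (H n.+1 - H n)%:E) @ \oo --> l) ->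
  limn_esup (fun n => (H n.+1 - H n)%:E) <= limn_esup (fun n => (H n / n%:R)%:E).
Proof.
move=> H0 [[d0 [d0_gt0 mean_noninc]]|[l incr_l]].
  apply: le_limn_esup; exists d0 => // n /= d0n; rewrite lee_fin.
  by apply: increment_le_mean (mean_noninc n d0n); exact: leq_trans d0n.
by rewrite (limn_esup_cvg incr_l); exact: lim_increment_le_limn_esup_mean.
Qed.

End LimnEsup.

Theorem corollary1 (R : realType) (S : ptopologicalType)
  (mu : probability (borel S) R) (T : borel S -> borel S)
  (N : nat) (X : 'I_N -> borel S -> R) :
  measurable_fun setT T ->
  (forall B : set (borel S), measurable B -> mu (T @^-1` B) = mu B) ->
  (0 < N)%N ->
  (forall i, measurable_fun setT (X i)) ->
  ((fun dd => (h_part mu T (ord_part T X dd))%:E) @ \oo --> hKS mu T)%E ->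
  ((exists d0 : nat, (1 <= d0)%N /\
      forall dd, (d0 <= dd)%N -> perm_ent mu T X dd.+1 <= perm_ent mu T X dd)
   \/ (exists l : \bar R, ((fun dd => (sort_ent mu T X dd)%:E) @ \oo --> l)%E)) ->
  hKS mu T = limn_esup (fun dd => (perm_ent mu T X dd)%:E) ->
  hKS mu T = limn_esup (fun dd => (cond_ent mu T X dd)%:E).
Proof.
move=> mT muT _ mX h_cvg increments h_perm.
have mP dd := measurable_fibres_ord_pattern mT mX (dd := dd).
have H0 dd : 0 <= Hent mu (ord_part T X dd).
  by rewrite ord_part_fibre; exact: entropy_ge0 (mP dd).
have h_le_cond dd : h_part mu T (ord_part T X dd) <= cond_ent mu T X dd.
  rewrite /cond_ent ord_part_fibre joinP_fibre.
  by case/andP: (h_part_fibre_bounds mT muT (mP dd)).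
have cond_le_sort dd : cond_ent mu T X dd <= sort_ent mu T X dd.
  rewrite /cond_ent /sort_ent !ord_part_fibre joinP_fibre lerD2r.
  exact: entropy_join2_le_succ.
apply/eqP; rewrite eq_le; apply/andP; split.
  by rewrite -(limn_esup_cvg h_cvg); apply: le_limn_esup; apply: nearW => dd; rewrite lee_fin.
(* [increments] is (a) or (b) for H d := Hent mu (ord_part T X d), up to
   unfolding perm_ent and sort_ent. *)
rewrite h_perm; apply: le_trans (limn_esup_increment_le_mean H0 increments).
by apply: le_limn_esup; apply: nearW => dd; rewrite lee_fin.
Qed.
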